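(* Let $G=(V,E)$ be a finite simple undirected graph, let $M$ be the matching computed by a run of \textsc{MinGreedy} on $G$, and let $M^*$ be a maximum matching of $G$ such that every connected component of $(V,M\cup M^* )$ with an edge is either an edge of $M\cap M^*$ or an $M$-$M^*$-path. Let $w$ be an endpoint of an $M$-$M^*$-path. Then the degree of $w$ in $G$ satisfies $d_G(w)\geq 2$; in particular, $w$ is incident with an edge of $F=E\setminus(M\cup M^* )$.
   Context: \textsc{MinGreedy}: starting with $M=\emptyset$, repeatedly select an arbitrary node $u$ of minimum non-zero current degree and an arbitrary neighbor $v$ of $u$, add $\{u,v\}$ to $M$ and remove all edges incident with $u$ or $v$ from the current graph, until no edges remain. An $M$-$M^*$-path is a connected component of $(V,M\cup M^* )$ that is an alternating path starting and ending with an $M^*$-edge and containing $m\geq1$ edges of $M$ and $m+1$ edges of $M^*$; its endpoints are its two end nodes (which are not covered by $M$). *)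

(* A finite simple undirected graph is a symmetric,
   irreflexive relation e on a finType V.  Edges are 2-element sets {x,y}. *)
From mathcomp Require Import all_boot.
Set Implicit Arguments. Unset Strict Implicit. Unset Printing Implicit Defensive.

Section Defs.
Variable V : finType.
Implicit Types (e : rel V) (C : {set V}) (M Ms : {set {set V}}).

Definition is_edge e (f : {set V}) : bool :=
  [exists x, exists y, e x y && (f == [set x; y])].

Definition deg e (x : V) : nat := #|[set y | e x y]|.

Definition matching e M : Prop :=
  (forall f, f \in M -> is_edge e f) /\
  (forall f g, f \in M -> g \in M -> f != g -> [disjoint f & g]).

Definition max_matching e M : Prop :=
  matching e M /\ forall M', matching e M' -> #|M'| <= #|M|.

(* current graph of MinGreedy after the nodes in C have been matched:
   all edges incident with a node of C have been removed *)
Definition cur e C : rel V := fun x y => [&& e x y, x \notin C & y \notin C].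
Definition cdeg e C (x : V) : nat := #|[set y | cur e C x y]|.

(* s = [:: (u1,v1); ...; (uk,vk)] is a (complete) run of MinGreedy from the
   current graph determined by C: at each step u has minimum non-zero current
   degree and v is a current neighbour of u; at the end no edge remains. *)
Fixpoint mg_run e C (s : seq (V * V)) : bool :=
  match s with
  | [::] => [forall x, forall y, ~~ cur e C x y]
  | (u, v) :: s' =>
      [&& cur e C u v,
          [forall x, (0 < cdeg e C x) ==> (cdeg e C u <= cdeg e C x)]
        & mg_run e (u |: (v |: C)) s']
  end.

Definition greedyM (s : seq (V * V)) : {set {set V}} :=
  [set ([set p.1; p.2] : {set V}) | p in s].

Definition Hrel M Ms : rel V := fun x y => [set x; y] \in M :|: Ms.

Definition path_edges (p : seq V) : seq {set V} :=
  [seq [set a.1; a.2] | a <- zip p (behead p)].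

(* the vertex sequence p = x0 x1 ... x_{2m+1} (m >= 1) spans a connected
   component of (V, M u Mstar) which is an alternating path whose edges are,
   in order, in Mstar, M, Mstar, ..., Mstar; the edges of (V, M u Mstar) incident with a
   vertex of p are exactly the path edges. *)
Definition MMpath M Ms (p : seq V) : Prop :=
  [/\ uniq p, 4 <= size p, ~~ odd (size p),
      (forall i, i < size (path_edges p) ->
         nth set0 (path_edges p) i \in (if odd i then M else Ms))
    & [set f in M :|: Ms | [exists x in p, x \in f]] = [set f in path_edges p]].

Definition components_ok M Ms : Prop :=
  forall x, (exists y, Hrel M Ms x y) ->
    (exists y, [set x; y] \in M :&: Ms /\
               [set z | connect (Hrel M Ms) x z] = [set x; y])
    \/ (exists p, MMpath M Ms p /\ x \in p).

End Defs.

From mathcomp Require Import all_boot zify.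

(* Suppose the endpoint w = x_0 of the M-M^*-path x_0 ... x_{2m+1} had degree 1.
   Consider the first MinGreedy step that matches a node of the path.  Up to
   then no path node is matched, so w still has current degree 1 (its path
   neighbour x_1 is still there), and the chosen node u has current degree
   at most 1.  The chosen edge lies in M and meets the path, hence it is a
   path edge; M-edges of an alternating path are inner edges, so u is an
   inner node x_j whose two path neighbours x_{j-1}, x_{j+1} are still
   unmatched: u has current degree at least 2, a contradiction.
   Since x_1 is the only neighbour of w along edges of M or M^*, a second
   neighbour of w in G is joined to w by an edge of F. *)

Set Implicit Arguments. Unset Strict Implicit. Unset Printing Implicit Defensive.

Section PathEdges.
Variable V : finType.
Implicit Types (p : seq V) (d : V).

Lemma size_path_edges p : size (path_edges p) = (size p).-1.
Proof. by rewrite size_map size_zip size_behead (minn_idPr (leq_pred _)). Qed.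

Lemma nth_path_edges p d i : i < (size p).-1 ->
  nth set0 (path_edges p) i = [set nth d p i; nth d p i.+1].
Proof.
have size_zip_p : size (zip p (behead p)) = (size p).-1.
  by rewrite size_zip size_behead (minn_idPr (leq_pred _)).
move=> ltip; rewrite (nth_map (d, d)) ?size_zip_p //.
by rewrite nth_zip_cond size_zip_p ltip /= nth_behead.
Qed.

Lemma mem_path_edges p d f : f \in path_edges p ->
  exists2 i, i < (size p).-1 & f = [set nth d p i; nth d p i.+1].
Proof.
case/(nthP set0) => i; rewrite size_path_edges => ltip <-.
by exists i; rewrite // (nth_path_edges d).
Qed.

Lemma path_edges_rev p : path_edges (rev p) = rev (path_edges p).
Proof.
apply: (@eq_from_nth _ set0) => [|i].
  by rewrite size_rev !size_path_edges size_rev.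
case: p => [//|a p]; rewrite size_path_edges size_rev => lti.
rewrite nth_rev ?size_path_edges // !(nth_path_edges a) ?size_rev //; last by lia.
by rewrite !nth_rev; [rewrite setUC; congr [set _; _]; congr nth; lia | lia | lia].
Qed.

End PathEdges.

Section MinGreedy.
Variables (V : finType) (e : rel V).
Implicit Types (C : {set V}) (s : seq (V * V)).

Lemma is_edge_set2 a b : symmetric e -> is_edge e [set a; b] -> e a b.
Proof.
move=> esym /existsP[x /existsP[y /andP[exy /eqP eab]]].
have: x \in [set a; b] by rewrite eab set21.
have: y \in [set a; b] by rewrite eab set22.
have: b \in [set x; y] by rewrite -eab set22.
have: a \in [set x; y] by rewrite -eab set21.
by do 4!case/set2P=> ?; subst; rewrite // esym.
Qed.

Lemma cur_subset C C' x y : C \subset C' -> cur e C' x y -> cur e C x y.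
Proof.
move=> /subsetP sCC' /and3P[exy xC' yC'].
by rewrite /cur exy (contra (sCC' x)) ?(contra (sCC' y)).
Qed.

Lemma cdeg_le_deg C x : cdeg e C x <= deg e x.
Proof. by apply: subset_leq_card; apply/subsetP=> y; rewrite !inE => /andP[]. Qed.

Lemma mg_run_cur C s q : mg_run e C s -> q \in s -> cur e C q.1 q.2.
Proof.
elim: s C => [//|[a b] s IHs] C /= /and3P[cab _ run_s].
rewrite in_cons => /orP[/eqP-> //|qs].
by apply: cur_subset (IHs _ run_s qs); apply/subsetP=> z zC; rewrite !inE zC !orbT.
Qed.

Lemma mg_run_avoid C a b s q : mg_run e C ((a, b) :: s) -> q \in s ->
  [disjoint [set q.1; q.2] & [set a; b]].
Proof.
case/and3P=> _ _ /mg_run_cur/[apply]/and3P[_].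
rewrite disjoints_subset subUset !sub1set !inE !negb_or.
by case/and3P=> -> -> _ /and3P[-> -> _].
Qed.

Lemma mg_run_disjoint C s q q' : mg_run e C s -> q \in s -> q' \in s ->
  [set q.1; q.2] != [set q'.1; q'.2] -> [disjoint [set q.1; q.2] & [set q'.1; q'.2]].
Proof.
elim: s C => [//|[a b] s IHs] C run_abs; have /and3P[_ _ run_s] := run_abs.
rewrite !in_cons => /orP[/eqP-> | qs] /orP[/eqP-> | q's]; rewrite ?eqxx //.
- by move=> _; rewrite disjoint_sym (mg_run_avoid run_abs).
- by move=> _; rewrite (mg_run_avoid run_abs).
- exact: IHs run_s qs q's.
Qed.

Lemma greedyM_matching C s : mg_run e C s -> matching e (greedyM s).
Proof.
move=> run_s; split=> [f /imsetP[q qs ->] | f g /imsetP[q qs ->] /imsetP[q' q's ->]].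
- have /and3P[e_q _ _] := mg_run_cur run_s qs.
  by apply/existsP; exists q.1; apply/existsP; exists q.2; rewrite e_q eqxx.
- exact: (mg_run_disjoint run_s qs q's).
Qed.

Lemma mg_run_first_touch (P : {pred V}) C s :
  mg_run e C s -> {in P, forall z, z \notin C} ->
  has (fun q => (q.1 \in P) || (q.2 \in P)) s ->
  exists C' u v s', [/\ mg_run e C' ((u, v) :: s'), {in P, forall z, z \notin C'},
                       (u, v) \in s & (u \in P) || (v \in P)].
Proof.
elim: s C => [//|[a b] s IHs] C run_abs PC.
have [touch_ab _ | untouched_ab] := boolP ((a \in P) || (b \in P)).
  by exists C, a, b, s; rewrite mem_head.
rewrite /= (negbTE untouched_ab) => touch_s.
have /and3P[_ _ run_s] := run_abs.
have PC' : {in P, forall z, z \notin a |: (b |: C)}.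
  move=> z zP; rewrite !inE (negbTE (PC z zP)) orbF.
  by apply: contraNN untouched_ab => /orP[]/eqP<-; rewrite zP ?orbT.
have [C' [u [v [s' [run_uvs PC'' uvs touch_uv]]]]] := IHs _ run_s PC' touch_s.
by exists C', u, v, s'; rewrite in_cons uvs orbT.
Qed.

End MinGreedy.

Section MMpathRev.
Variables (V : finType) (M Ms : {set {set V}}) (p : seq V).

Lemma MMpath_rev : MMpath M Ms p -> MMpath M Ms (rev p).
Proof.
case=> uniq_p size_p even_p alt_p inc_p.
have size_pe : size (path_edges p) = (size p).-1 by rewrite size_path_edges.
split; rewrite ?rev_uniq ?size_rev ?path_edges_rev //.
- move=> i; rewrite size_rev => lti; rewrite nth_rev //.
  have -> : odd i = odd (size (path_edges p) - i.+1).
    by rewrite size_pe oddB ?(negbTE even_p) //=; lia.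
  by apply: alt_p; lia.
- apply/setP=> f; move/setP/(_ f): inc_p; rewrite !inE mem_rev => <-.
  by congr (_ && _); apply: eq_existsb => z; rewrite mem_rev.
Qed.

End MMpathRev.

Section MMpathFacts.
Variables (V : finType) (e : rel V) (M Ms : {set {set V}}) (p : seq V) (d : V).
Hypotheses (esym : symmetric e) (eirr : irreflexive e).
Hypotheses (matching_M : matching e M) (matching_Ms : matching e Ms).
Hypothesis MMpath_p : MMpath M Ms p.

Local Notation x i := (nth d p i).

Let uniq_p : uniq p. Proof. by case: MMpath_p. Qed.
Let size_p : 3 < size p. Proof. by case: MMpath_p. Qed.
Let even_p : ~~ odd (size p). Proof. by case: MMpath_p. Qed.

Let nth_eq i j : i < size p -> j < size p -> (x i == x j) = (i == j).
Proof. by move=> lti ltj; rewrite nth_uniq. Qed.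

Let nth_mem i : i < size p -> x i \in p.
Proof. exact: mem_nth. Qed.

Lemma MMpath_edge_alt i : i < (size p).-1 ->
  [set x i; x i.+1] \in (if odd i then M else Ms).
Proof.
case: MMpath_p => _ _ _ alt_p _ lti.
by rewrite -(nth_path_edges d lti) alt_p ?size_path_edges.
Qed.

Lemma MMpath_edge i : i < (size p).-1 -> [set x i; x i.+1] \in M :|: Ms.
Proof. by move/MMpath_edge_alt; case: (odd i) => f_in; rewrite inE f_in ?orbT. Qed.

Lemma MMpath_adj i : i < (size p).-1 -> e (x i) (x i.+1).
Proof.
move/MMpath_edge/setUP=> [/(proj1 matching_M) | /(proj1 matching_Ms)];
  exact: is_edge_set2.
Qed.

Lemma MMpath_incident f z : f \in M :|: Ms -> z \in p -> z \in f ->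
  exists2 i, i < (size p).-1 & f = [set x i; x i.+1].
Proof.
case: MMpath_p => _ _ _ _ inc_p f_in zp zf.
have : f \in [set f in M :|: Ms | [exists z in p, z \in f]].
  by rewrite inE f_in; apply/existsP; exists z; rewrite zp.
by rewrite inc_p inE => /(mem_path_edges d).
Qed.

Lemma MMpath_M_not_consecutive i : i.+1 < (size p).-1 ->
  [set x i; x i.+1] \in M -> [set x i.+1; x i.+2] \in M -> False.
Proof.
move=> lti fM gM.
have xi_g : x i \notin [set x i.+1; x i.+2].
  by rewrite !inE !nth_eq; lia.
have fg : [set x i; x i.+1] != [set x i.+1; x i.+2].
  by apply: contraNneq xi_g => <-; rewrite set21.
have /pred0P/(_ (x i.+1)) := proj2 matching_M _ _ fM gM fg.
by rewrite /= !inE eqxx orbT.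
Qed.

Lemma MMpath_M_odd i : i < (size p).-1 -> [set x i; x i.+1] \in M -> odd i.
Proof.
move=> lti fM; apply/negPn/negP => even_i.
have [lti1 | geqi1] := ltnP i.+1 (size p).-1.
  apply: (MMpath_M_not_consecutive lti1 fM).
  by have := MMpath_edge_alt lti1; rewrite /= even_i.
have i_gt0 : 0 < i by lia.
have lt_pred_i : i.-1.+1 < (size p).-1 by lia.
apply: (MMpath_M_not_consecutive lt_pred_i); rewrite prednK //.
have odd_pred_i : odd i.-1 by move: even_i; rewrite -(prednK i_gt0) /= negbK.
by have := MMpath_edge_alt (ltnW lt_pred_i); rewrite odd_pred_i prednK.
Qed.

Lemma MMpath_M_inner i : i < (size p).-1 ->
  [set x i; x i.+1] \in M -> 0 < i < (size p).-2.
Proof.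
move=> lti /(MMpath_M_odd lti) odd_i.
have i_gt0 := odd_gt0 odd_i.
have : i != size p - 2.
  by apply: contraTneq odd_i => ->; rewrite oddB ?(negbTE even_p) //; lia.
lia.
Qed.

Lemma MMpath_start_neighbour y :
  [set x 0; y] \in M :|: Ms -> y != x 0 -> y = x 1.
Proof.
move=> f_in y_x0; have p_x0 : x 0 \in p by apply: nth_mem; lia.
have [i lti f_eq] := MMpath_incident f_in p_x0 (set21 _ _).
have : x 0 \in [set x i; x i.+1] by rewrite -f_eq set21.
have : y \in [set x i; x i.+1] by rewrite -f_eq set22.
rewrite !inE !(eq_sym (x 0)) !nth_eq; try lia.
move=> /orP[]/eqP y_eq /orP[]/eqP i_eq //; subst y.
- by rewrite i_eq eqxx in y_x0.
- by rewrite i_eq.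
Qed.

Lemma MMpath_interior_cdeg (C : {set V}) j : {in p, forall z, z \notin C} ->
  0 < j < (size p).-1 -> 1 < cdeg e C (x j).
Proof.
move=> pC /andP[j_gt0 ltj].
have two_nbrs : #|[set x j.-1; x j.+1]| = 2.
  by rewrite cards2 nth_eq //; lia.
rewrite -two_nbrs; apply: subset_leq_card; apply/subsetP=> y.
case/set2P=> ->; rewrite inE /cur !pC ?nth_mem ?andbT; try lia.
- by rewrite esym -{2}(prednK j_gt0) MMpath_adj //; lia.
- exact: MMpath_adj.
Qed.

Lemma MMpath_start_free_edge : 1 < deg e (x 0) ->
  exists y, e (x 0) y /\ [set x 0; y] \notin M :|: Ms.
Proof.
move=> deg_gt1; have : 0 < #|[set y | e (x 0) y] :\ x 1|.
  by move: deg_gt1; rewrite /deg (cardsD1 (x 1)); case: (_ \in _) => /=; lia.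
case/card_gt0P=> y; rewrite !inE => /andP[y_x1 x0y].
exists y; split=> //; apply: contra y_x1 => y_in.
by rewrite (MMpath_start_neighbour y_in) //;
  apply: contraTneq x0y => ->; rewrite eirr.
Qed.

Lemma MMpath_start_deg s : mg_run e set0 s -> M = greedyM s -> 1 < deg e (x 0).
Proof.
move=> run_s M_def; rewrite ltnNge; apply/negP => deg_le1.
have touch_p : has (fun q => (q.1 \in p) || (q.2 \in p)) s.
  have /imsetP[q qs q_eq] : [set x 1; x 2] \in greedyM s.
    by rewrite -M_def; apply: MMpath_edge_alt; lia.
  apply/hasP; exists q => //.
  have : q.1 \in [set x 1; x 2] by rewrite q_eq set21.
  by case/set2P=> ->; rewrite nth_mem //; lia.
have [C [u [v [s' [run_uv pC uvs touch_uv]]]]] :=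
  mg_run_first_touch run_s (fun z _ => negbT (in_set0 z)) touch_p.
case/and3P: run_uv => _ /forallP min_u _.
have cdeg_x0 : 0 < cdeg e C (x 0).
  apply/card_gt0P; exists (x 1); rewrite inE /cur !pC ?nth_mem ?andbT; try lia.
  by apply: MMpath_adj; lia.
have cdeg_u : cdeg e C u <= 1.
  apply: leq_trans (implyP (min_u (x 0)) cdeg_x0) _.
  exact: leq_trans (cdeg_le_deg _ _ _) deg_le1.
have uvM : [set u; v] \in M by rewrite M_def; apply/imsetP; exists (u, v).
have [i lti uv_eq] : exists2 i, i < (size p).-1 & [set u; v] = [set x i; x i.+1].
  have uv_in : [set u; v] \in M :|: Ms by rewrite inE uvM.
  case/orP: touch_uv => [u_p | v_p].
  - exact: MMpath_incident uv_in u_p (set21 _ _).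
  - exact: MMpath_incident uv_in v_p (set22 _ _).
have /andP[i_gt0 lti2] : 0 < i < (size p).-2.
  by apply: MMpath_M_inner; rewrite -?uv_eq.
have : u \in [set x i; x i.+1] by rewrite -uv_eq set21.
case/set2P=> u_eq; rewrite u_eq in cdeg_u.
- by have := @MMpath_interior_cdeg C i pC; lia.
- by have := @MMpath_interior_cdeg C i.+1 pC; lia.
Qed.

End MMpathFacts.

Theorem lemma2 (V : finType) (e : rel V) (s : seq (V * V))
    (Ms : {set {set V}}) (w : V) :
  symmetric e -> irreflexive e ->
  mg_run e set0 s ->
  max_matching e Ms ->
  components_ok (greedyM s) Ms ->
  (exists p, MMpath (greedyM s) Ms p /\ (w = head w p \/ w = last w p)) ->
  2 <= deg e w /\ exists y, e w y /\ [set w; y] \notin greedyM s :|: Ms.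
Proof.
move=> esym eirr run_s [matching_Ms _] _ [p [MMpath_p w_end]].
have matching_M := greedyM_matching run_s.
wlog {w_end} -> : p MMpath_p / w = nth w p 0.
  move=> w_start; case: w_end => [w_head | w_last]; first exact: w_start w_head.
  apply: w_start (MMpath_rev MMpath_p) _.
  have [_ size_p _ _ _] := MMpath_p.
  by rewrite nth_rev ?size_rev ?subn1 ?nth_last //; lia.
have deg_w : 1 < deg e (nth w p 0).
  exact: (MMpath_start_deg w esym matching_M matching_Ms MMpath_p run_s erefl).
by split=> //; apply: MMpath_start_free_edge.
Qed.
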